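(* For $\vec x,\vec y,\vec z,\vec u,\vec v,\vec w\in\Lambda_G$ the following hold in $\kappa G^\#$: (i) $([\vec y,\vec z]\cdot\vec w)(\vec x\cdot\vec u)-([\vec x,\vec z]\cdot\vec w)(\vec y\cdot\vec u)+([\vec x,\vec y]\cdot\vec w)(\vec z\cdot\vec u)-([\vec x,\vec y]\cdot\vec z)(\vec w\cdot\vec u)=0$; (ii) $([\vec x,\vec y]\cdot\vec z)([\vec u,\vec v]\cdot\vec w)=\det\begin{pmatrix}\vec x\cdot\vec u&\vec x\cdot\vec v&\vec x\cdot\vec w\\ \vec y\cdot\vec u&\vec y\cdot\vec v&\vec y\cdot\vec w\\ \vec z\cdot\vec u&\vec z\cdot\vec v&\vec z\cdot\vec w\end{pmatrix}$.
   Context: Let $\kappa$ be a field of characteristic $0$ and $G$ a group. Let $*:\kappa G\to\kappa G$ be the $\kappa$-linear map with $g^*=g^{-1}$, $(\kappa G)^*$ its fixed points, and $A_G$ the quotient of $\kappa G$ by the two-sided ideal generated by all $ab-ba$, $a\in\kappa G$, $b\in(\kappa G)^*$; $*$ descends to $A_G$. Let $\kappa G^\#=\{x\in A_G:x^*=x\}$ (a commutative subring of the centre of $A_G$) and $\Lambda_G=\{x\in A_G:x^*=-x\}$. For $\vec x,\vec y\in\Lambda_G$ define $\vec x\cdot\vec y=-\tfrac12(\vec x\vec y+\vec y\vec x)\in\kappa G^\#$ and $[\vec x,\vec y]=\tfrac12(\vec x\vec y-\vec y\vec x)\in\Lambda_G$. *)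

From HB Require Import structures.
From mathcomp Require Import all_boot all_order all_algebra.
Set Implicit Arguments. Unset Strict Implicit. Unset Printing Implicit Defensive.
Import GRing.Theory.

(* The group algebra kG is modelled by formal finite linear combinations
   [seq (coefficient, group element)]; two formal combinations denote the
   same element of kG iff they have the same coefficient function [coef].
   The quotient A_G = kG / I is modelled by the congruence [eqA] (difference
   lies in the two-sided ideal I). *)

Section GroupAlgebra.
Variables (K : fieldType) (G : groupType).
Local Open Scope ring_scope.

Definition kG := seq (K * G).

Definition coef (a : kG) (g : G) : K := \sum_(p <- a | p.2 == g) p.1.

Definition kzero : kG := [::].
Definition kadd (a b : kG) : kG := a ++ b.
Definition kscale (k : K) (a : kG) : kG := [seq (k * p.1, p.2) | p <- a].
Definition kopp (a : kG) : kG := kscale (-1) a.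
Definition ksub (a b : kG) : kG := kadd a (kopp b).
Definition kmul (a b : kG) : kG :=
  [seq (p.1 * q.1, (p.2 * q.2)%g) | p <- a, q <- b].
Definition kstar (a : kG) : kG := [seq (p.1, (p.2)^-1%g) | p <- a].

Definition keq (a b : kG) : Prop := forall g, coef a g = coef b g.

Definition selfadj (d : kG) : Prop := keq (kstar d) d.

Definition ksum (s : seq kG) : kG := foldr kadd kzero s.

Definition idgen (q : kG * kG * kG * kG) : kG :=
  let: (a, c, d, b) := q in kmul (kmul a (ksub (kmul c d) (kmul d c))) b.

(* I = two-sided ideal generated by all cd - dc, c in kG, d in (kG)^*:
   finite sums of a (cd - dc) b *)
Definition inI (f : kG) : Prop :=
  exists s : seq (kG * kG * kG * kG),
    (forall q, q \in s -> selfadj q.1.2) /\ keq f (ksum (map idgen s)).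

Definition eqA (a b : kG) : Prop := inI (ksub a b).

Definition inLambda (x : kG) : Prop := eqA (kstar x) (kopp x).

Definition kdot (x y : kG) : kG := kscale (- (1 / 2%:R)) (kadd (kmul x y) (kmul y x)).
Definition kbr (x y : kG) : kG := kscale (1 / 2%:R) (ksub (kmul x y) (kmul y x)).

Definition kdet3 (m11 m12 m13 m21 m22 m23 m31 m32 m33 : kG) : kG :=
  ksum [:: kmul (kmul m11 m22) m33; kmul (kmul m12 m23) m31;
           kmul (kmul m13 m21) m32;
           kopp (kmul (kmul m13 m22) m31); kopp (kmul (kmul m11 m23) m32);
           kopp (kmul (kmul m12 m21) m33)].

End GroupAlgebra.

From HB Require Import structures.
From mathcomp Require Import all_boot all_order all_algebra.
From mathcomp Require Import boolp.
From mathcomp Require Import ring.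
Import GRing.Theory.
Local Open Scope ring_scope.
Set Implicit Arguments. Unset Strict Implicit. Unset Printing Implicit Defensive.

(* Let R be a ring with a central
      element h satisfying 2h = 1 and a subset Λ closed under the bracket
      [a,b] = h(ab - ba), such that anticommutators ab + ba of elements of Λ
      are central; put a·b = -h(ab + ba).  Then every product abc of elements
      of Λ is h times a combination of a, b, c with central coefficients,
      minus the triple product [a,b]·c (lemma [mul3_split]).  Expanding
      (ab)(cd) as (abc)d and as a(bcd) gives the "Cramer identity"
        ([y,z]·w) x - ([x,z]·w) y + ([x,y]·w) z - ([x,y]·z) w = 0,
      whose dot product with u is identity (i).  Taking [u,v] for w and using
      Lagrange's identity [p,q]·[u,v] = (p·u)(q·v) - (p·v)(q·u), its dot
      product with w is identity (ii).
   2. Concrete layer.  In characteristic 0 the class of 1/2 is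
      central in QA, and the image of Λ_G satisfies the hypotheses of layer 1:
      ab + ba is the class of a self-adjoint element, hence central. *)

Inductive zexpr : Type :=
  | ZAtom of nat | ZZero | ZAdd of zexpr & zexpr | ZOpp of zexpr.

Fixpoint zcoef (e : zexpr) (n : nat) : int :=
  match e with
  | ZAtom m => (m == n)%:Z
  | ZZero => 0
  | ZAdd e1 e2 => zcoef e1 n + zcoef e2 n
  | ZOpp e1 => - zcoef e1 n
  end.

Fixpoint zbound (e : zexpr) : nat :=
  match e with
  | ZAtom m => m.+1
  | ZZero => 0
  | ZAdd e1 e2 => maxn (zbound e1) (zbound e2)
  | ZOpp e1 => zbound e1
  end.

Section ZmodNormalize.
Variables (V : zmodType) (env : seq V).

Fixpoint zden (e : zexpr) : V :=
  match e with
  | ZAtom m => nth 0 env m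
  | ZZero => 0
  | ZAdd e1 e2 => zden e1 + zden e2
  | ZOpp e1 => - zden e1
  end.

Lemma zden_sum e N : (zbound e <= N)%N ->
  zden e = \sum_(i < N) nth 0 env i *~ zcoef e i.
Proof.
elim: e => [m|| e1 IH1 e2 IH2| e1 IH1] /= hN.
- rewrite (bigD1 (Ordinal hN)) //= eqxx mulr1z big1 ?addr0 // => i /negbTE.
  by rewrite -val_eqE /= eq_sym => ->; rewrite mulr0z.
- by rewrite big1 // => i _; rewrite mulr0z.
- rewrite geq_max in hN; case/andP: hN => h1 h2.
  by rewrite IH1 // IH2 // -big_split /=; apply: eq_bigr => i _; rewrite mulrzDr.
- by rewrite IH1 // -sumrN; apply: eq_bigr => i _; rewrite mulrNz.
Qed.

Lemma zden_eq e1 e2 :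
  all (fun i => zcoef e1 i == zcoef e2 i) (iota 0 (maxn (zbound e1) (zbound e2))) ->
  zden e1 = zden e2.
Proof.
move=> /allP same; set N := maxn (zbound e1) (zbound e2).
rewrite (@zden_sum e1 N) ?leq_maxl // (@zden_sum e2 N) ?leq_maxr //.
apply: eq_bigr => i _; congr (_ *~ _); apply/eqP/same.
by rewrite mem_iota /= add0n ltn_ord.
Qed.

End ZmodNormalize.

Ltac zindex t l :=
  lazymatch l with
  | (?x :: ?l') => match constr:(tt) with
                   | _ => let _ := constr:(erefl x : x = t) in constr:(0%N)
                   | _ => let n := zindex t l' in constr:(S n)
                   end
  end.

Ltac zatoms t l :=
  lazymatch t with
  | (?a + ?b)%R => let l1 := zatoms a l in zatoms b l1
  | (- ?a)%R => zatoms a l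
  | 0%R => l
  | _ => match constr:(tt) with
         | _ => let _ := zindex t l in l
         | _ => constr:(t :: l)
         end
  end.

Ltac zreify t l :=
  lazymatch t with
  | (?a + ?b)%R => let x := zreify a l in let y := zreify b l in constr:(ZAdd x y)
  | (- ?a)%R => let x := zreify a l in constr:(ZOpp x)
  | 0%R => constr:(ZZero)
  | _ => let n := zindex t l in constr:(ZAtom n)
  end.

(* Proves L = R in a zmodType when both sides agree as formal Z-linear
   combinations of their non-additive subterms. *)
Ltac zmod_solve :=
  lazymatch goal with
  | |- ?L = ?R =>
    let T := type of L in
    let l0 := zatoms L (@nil T) in
    let l1 := zatoms R l0 in
    let l := eval simpl in l1 in
    let e1 := zreify L l in
    let e2 := zreify R l in
    change (zden l e1 = zden l e2); apply: zden_eq; vm_compute; reflexivity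
  end.

Definition central (R : pzRingType) (c : R) : Prop := forall r, c * r = r * c.

Section Central.
Variable R : pzRingType.
Implicit Types c d x y : R.

Lemma centralN c : central c -> central (- c).
Proof. by move=> hc r; rewrite mulNr mulrN hc. Qed.

Lemma centralM c d : central c -> central d -> central (c * d).
Proof. by move=> hc hd r; rewrite -mulrA hd mulrA hc mulrA. Qed.

Lemma mulrCA_central c x y : central c -> x * (c * y) = c * (x * y).
Proof. by move=> hc; rewrite mulrA -hc mulrA. Qed.

Lemma mulrAC_central c x y : central c -> c * x * y = x * c * y.
Proof. by move=> hc; rewrite hc. Qed.

Lemma mulr_rot_central c x y : central c -> c * x * y = x * y * c.
Proof. by move=> hc; rewrite -mulrA hc. Qed.

Lemma mulr_rev_central c x y : central c -> central y -> c * x * y = y * x * c.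
Proof. by move=> hc hy; rewrite -hy -mulrA hc. Qed.

End Central.

Section LambdaAlgebra.
Variables (R : pzRingType) (h : R) (Lam : R -> Prop).
Hypothesis h_central : central h.
Hypothesis h_half : h * 2%:R = 1.
Hypothesis acomm_central : forall a b, Lam a -> Lam b -> central (a * b + b * a).
Hypothesis Lam_closed : forall a b, Lam a -> Lam b -> Lam (h * (a * b - b * a)).
Implicit Types a b c d e p q r u v w x y z : R.

(* Anticommutator, bracket [a,b], dot product a·b and triple product [a,b]·c.
   They are locked, so that ring rewriting treats them as atoms. *)
Definition acomm a b := locked (a * b + b * a).
Definition br a b := locked (h * (a * b - b * a)).
Definition dot a b := locked (- h * acomm a b).
Definition triple a b c := locked (dot (br a b) c).

Lemma acommE a b : acomm a b = a * b + b * a. Proof. by rewrite /acomm -lock. Qed.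
Lemma brE a b : br a b = h * (a * b - b * a). Proof. by rewrite /br -lock. Qed.
Lemma dotE a b : dot a b = - h * acomm a b. Proof. by rewrite /dot -lock. Qed.
Lemma tripleE a b c : triple a b c = dot (br a b) c. Proof. by rewrite /triple -lock. Qed.

Lemma half_double x : h * (x + x) = x.
Proof. by rewrite -mulr2n -mulr_natl mulrA h_half mul1r. Qed.

Lemma mul_acomm a b : a * b = acomm a b - b * a.
Proof. by rewrite acommE addrK. Qed.

Lemma mul_acommC a b : b * a = acomm a b - a * b.
Proof. by rewrite acommE [a * b + _]addrC addrK. Qed.

Lemma acommC a b : acomm a b = acomm b a.
Proof. by rewrite !acommE addrC. Qed.

Lemma central_acomm a b : Lam a -> Lam b -> central (acomm a b).
Proof. by rewrite acommE; exact: acomm_central. Qed.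

Lemma Lam_br a b : Lam a -> Lam b -> Lam (br a b).
Proof. by rewrite brE; exact: Lam_closed. Qed.

Lemma central_dot a b : Lam a -> Lam b -> central (dot a b).
Proof.
by move=> ha hb; rewrite dotE; apply: centralM; [apply/centralN | apply: central_acomm].
Qed.

Lemma central_triple a b c : Lam a -> Lam b -> Lam c -> central (triple a b c).
Proof. by move=> ha hb hc; rewrite tripleE; apply: central_dot => //; apply: Lam_br. Qed.

Lemma brC a b : br b a = - br a b.
Proof. by rewrite !brE -[RHS]mulrN opprB. Qed.

Lemma dotC p q : dot p q = dot q p.
Proof. by rewrite !dotE acommC. Qed.

Lemma dot0l q : dot 0 q = 0.
Proof. by rewrite dotE acommE mul0r mulr0 addr0 mulr0. Qed.

Lemma dotNl p q : dot (- p) q = - dot p q.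
Proof. by rewrite !dotE !acommE [- p * q]mulNr [q * - p]mulrN -opprD mulrN. Qed.

Lemma dotDl p q r : dot (p + q) r = dot p r + dot q r.
Proof. by rewrite !dotE !acommE mulrDl [r * _]mulrDr addrACA mulrDr. Qed.

Lemma dotBl p q r : dot (p - q) r = dot p r - dot q r.
Proof. by rewrite dotDl dotNl. Qed.

Lemma dotBr p q r : dot r (p - q) = dot r p - dot r q.
Proof. by rewrite !(dotC r) dotBl. Qed.

Lemma dotZl c p q : central c -> dot (c * p) q = c * dot p q.
Proof.
move=> hc; rewrite !dotE !acommE -mulrA (mulrCA_central q _ hc) -mulrDr !mulrA.
by rewrite (centralN h_central c).
Qed.

Lemma dotZr c p q : central c -> dot q (c * p) = c * dot q p.
Proof. by move=> hc; rewrite !(dotC q) dotZl. Qed.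

Lemma mul3_sym a b c : Lam a -> Lam b -> Lam c ->
  a * b * c + c * b * a = acomm b c * a - acomm a c * b + acomm a b * c.
Proof.
move=> ha hb hc.
have e1 : a * b * c = acomm a b * c - b * (a * c) by rewrite [a * b]mul_acomm mulrBl mulrA.
have e2 : b * (a * c) = acomm a c * b - b * c * a.
  by rewrite [a * c]mul_acomm mulrBr mulrA (central_acomm ha hc).
have e3 : b * c * a = acomm b c * a - c * b * a by rewrite [b * c]mul_acomm mulrBl.
by rewrite e1 e2 e3; zmod_solve.
Qed.

Lemma triple_mul3 a b c : Lam a -> Lam b -> Lam c ->
  triple a b c = - (h * (a * b * c - c * b * a)).
Proof.
move=> ha hb hc.
have e1 : b * a * c = acomm a b * c - a * b * c by rewrite [b * a]mul_acommC mulrBl.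
have e2 : c * (a * b) = acomm a b * c - c * b * a.
  by rewrite [a * b]mul_acomm mulrBr mulrA -(central_acomm ha hb c).
have e : (a * b - b * a) * c + c * (a * b - b * a) =
         (a * b * c - c * b * a) + (a * b * c - c * b * a).
  by rewrite mulrBl mulrBr e1 e2 mulrA; zmod_solve.
rewrite tripleE dotE acommE brE (mulrCA_central c _ h_central) -(mulrA h _ c).
by rewrite -mulrDr e half_double mulNr.
Qed.

Lemma mul3_split a b c : Lam a -> Lam b -> Lam c ->
  a * b * c = h * (acomm b c * a - acomm a c * b + acomm a b * c) - triple a b c.
Proof.
move=> ha hb hc.
rewrite triple_mul3 // opprK -mul3_sym // -mulrDr addrACA subrr addr0.
by rewrite half_double.
Qed.

(* Comparing (abc)d with a(bcd) through [mul3_split]. *)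
Lemma mul4_assoc a b c d : Lam a -> Lam b -> Lam c -> Lam d ->
  triple b c d * a - triple a b c * d =
  h * (acomm c d * (a * b)) - h * (acomm b d * (a * c))
  + h * (acomm a c * (b * d)) - h * (acomm a b * (c * d)).
Proof.
move=> ha hb hc hd.
have assoc : a * b * c * d = a * (b * c * d) by rewrite !mulrA.
rewrite (mul3_split ha hb hc) (mul3_split hb hc hd) in assoc.
have expand_l : (h * (acomm b c * a - acomm a c * b + acomm a b * c) - triple a b c) * d =
    h * (acomm b c * (a * d)) - h * (acomm a c * (b * d)) + h * (acomm a b * (c * d))
    - triple a b c * d.
  by rewrite mulrBl -(mulrA h) !mulrDl !mulNr -!mulrA !mulrDr !mulrN.
have expand_r : a * (h * (acomm c d * b - acomm b d * c + acomm b c * d) - triple b c d) =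
    h * (acomm c d * (a * b)) - h * (acomm b d * (a * c)) + h * (acomm b c * (a * d))
    - triple b c d * a.
  rewrite mulrBr (mulrCA_central a _ h_central) !mulrDr !mulrN.
  rewrite (mulrCA_central a _ (central_acomm hc hd)).
  rewrite (mulrCA_central a _ (central_acomm hb hd)).
  rewrite (mulrCA_central a _ (central_acomm hb hc)).
  by rewrite (central_triple hb hc hd).
rewrite expand_l expand_r in assoc.
have -> : triple b c d * a =
    h * (acomm c d * (a * b)) - h * (acomm b d * (a * c)) + h * (acomm b c * (a * d))
    - (h * (acomm b c * (a * d)) - h * (acomm a c * (b * d)) + h * (acomm a b * (c * d))
       - triple a b c * d).
  by rewrite assoc; zmod_solve.
zmod_solve.
Qed.

Lemma triple_swap12 a b c : triple b a c = - triple a b c.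
Proof. by rewrite !tripleE brC dotNl. Qed.

Lemma triple_swap13 a b c : Lam a -> Lam b -> Lam c -> triple c b a = - triple a b c.
Proof. by move=> ha hb hc; rewrite !triple_mul3 // opprK -[LHS]mulrN opprB. Qed.

Lemma triple_swap23 a b c : Lam a -> Lam b -> Lam c -> triple a c b = - triple a b c.
Proof. by move=> ha hb hc; rewrite triple_swap12 triple_swap13 // triple_swap12 !opprK. Qed.

Lemma cramer x y z w : Lam x -> Lam y -> Lam z -> Lam w ->
  triple y z w * x - triple x z w * y + triple x y w * z - triple x y z * w = 0.
Proof.
move=> hx hy hz hw.
have assoc_xyzw := mul4_assoc hx hy hz hw.
have assoc_yxwz := mul4_assoc hy hx hw hz.
rewrite (triple_swap23 hx hz hw) (triple_swap12 x y w) !mulNr in assoc_yxwz.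
have -> : triple y z w * x - triple x z w * y + triple x y w * z - triple x y z * w =
    (triple y z w * x - triple x y z * w) + (- (triple x z w * y) - - (triple x y w * z)).
  by zmod_solve.
rewrite assoc_xyzw assoc_yxwz (acommC w z) (acommC y x).
have -> : forall A B C D E F : R, A - B + C - D + (E - C + B - F) = (A + E) - (D + F).
  by move=> *; zmod_solve.
by rewrite -!mulrDr -!acommE (central_acomm hz hw (acomm x y)) subrr.
Qed.

Lemma dot_br_assoc a b e : Lam a -> Lam b -> Lam e -> dot (br a b) e = dot a (br b e).
Proof.
move=> ha hb he.
have e1 : b * a * e = acomm a b * e - a * b * e by rewrite [b * a]mul_acommC mulrBl.
have e2 : e * a * b = acomm a e * b - a * e * b by rewrite [e * a]mul_acommC mulrBl.
have e3 : b * e * a = acomm a e * b - (acomm a b * e - a * b * e).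
  by rewrite -mulrA [e * a]mul_acommC mulrBr -(central_acomm ha he b) mulrA e1.
rewrite !dotE !acommE !brE (mulrCA_central e _ h_central).
rewrite (mulrCA_central a _ h_central) -!(mulrA h) -!mulrDr.
congr (_ * (h * _)).
by rewrite !mulrBl !mulrBr !mulrA e1 e2 e3; zmod_solve.
Qed.

Lemma mul3_rot a b c : Lam a -> Lam b -> Lam c ->
  a * b * c - b * c * a = acomm a b * c - acomm a c * b.
Proof.
move=> ha hb hc.
have -> : b * c * a = acomm a c * b - (acomm a b * c - a * b * c).
  rewrite -mulrA [c * a]mul_acommC mulrBr -(central_acomm ha hc b) mulrA.
  by rewrite [b * a]mul_acommC mulrBl.
by zmod_solve.
Qed.

Lemma br_br b c d : Lam b -> Lam c -> Lam d ->
  br b (br c d) = dot b d * c - dot b c * d.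
Proof.
move=> hb hc hd.
rewrite !brE (mulrCA_central b _ h_central) -(mulrA h _ b) -mulrBr.
have -> : b * (c * d - d * c) - (c * d - d * c) * b =
    (acomm b c * d - acomm b d * c) + (acomm b c * d - acomm b d * c).
  rewrite mulrBr mulrBl !mulrA.
  have -> : b * c * d - b * d * c - (c * d * b - d * c * b) =
      (b * c * d - c * d * b) - (b * d * c - d * c * b) by zmod_solve.
  by rewrite mul3_rot // mul3_rot //; zmod_solve.
by rewrite half_double !dotE -!mulrA !mulNr mulrBr; zmod_solve.
Qed.

Lemma triple_br p q u v : Lam p -> Lam q -> Lam u -> Lam v ->
  triple p q (br u v) = dot q v * dot p u - dot q u * dot p v.
Proof.
move=> hp hq hu hv.
rewrite tripleE dot_br_assoc //; last exact: Lam_br.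
by rewrite br_br // dotBr !dotZr //; exact: central_dot.
Qed.

(* Identity (i): the dot product of [cramer] with u. *)
Theorem lambda_identity_i x y z w u : Lam x -> Lam y -> Lam z -> Lam w -> Lam u ->
  dot (br y z) w * dot x u - dot (br x z) w * dot y u
  + dot (br x y) w * dot z u - dot (br x y) z * dot w u = 0.
Proof.
move=> hx hy hz hw hu.
rewrite -!tripleE -(dotZl _ _ (central_triple hy hz hw)).
rewrite -(dotZl _ _ (central_triple hx hz hw)) -(dotZl _ _ (central_triple hx hy hw)).
rewrite -(dotZl _ _ (central_triple hx hy hz)).
by rewrite -dotBl -dotDl -dotBl cramer // dot0l.
Qed.

(* Identity (ii): the dot product with w of [cramer] applied to x, y, z and
   [u,v], expanded with Lagrange's identity. *)
Theorem lambda_identity_ii x y z u v w :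
  Lam x -> Lam y -> Lam z -> Lam u -> Lam v -> Lam w ->
  dot (br x y) z * dot (br u v) w =
  dot x u * dot y v * dot z w + dot x v * dot y w * dot z u
  + dot x w * dot y u * dot z v - dot x w * dot y v * dot z u
  - dot x u * dot y w * dot z v - dot x v * dot y u * dot z w.
Proof.
move=> hx hy hz hu hv hw.
have huv := Lam_br hu hv.
have cd : forall p q, Lam p -> Lam q -> central (dot p q) by move=> *; apply: central_dot.
have expand : triple x y z * triple u v w =
    triple y z (br u v) * dot x w - triple x z (br u v) * dot y w
    + triple x y (br u v) * dot z w.
  have := congr1 (dot^~ w) (cramer hx hy hz huv).
  rewrite dot0l dotBl dotDl dotBl (dotZl _ _ (central_triple hy hz huv)).
  rewrite (dotZl _ _ (central_triple hx hz huv)) (dotZl _ _ (central_triple hx hy huv)).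
  rewrite (dotZl _ _ (central_triple hx hy hz)) -tripleE => cramer_w.
  by rewrite -[LHS]add0r -cramer_w; zmod_solve.
rewrite -!tripleE expand !triple_br // !mulrBl.
rewrite (mulr_rev_central _ (cd _ _ hz hv) (cd _ _ hx hw)).
rewrite (mulr_rev_central _ (cd _ _ hz hu) (cd _ _ hx hw)).
rewrite (mulr_rot_central _ _ (cd _ _ hz hv)) (mulr_rot_central _ _ (cd _ _ hz hu)).
rewrite (mulrAC_central _ _ (cd _ _ hy hv)) (mulrAC_central _ _ (cd _ _ hy hu)).
by zmod_solve.
Qed.

End LambdaAlgebra.

Section LinearEvaluation.
Variables (K : fieldType) (G : groupType).
Local Notation kG := (kG K G).
Implicit Types (a b c : kG) (F : G -> K).

Definition leval a F : K := \sum_(p <- a) p.1 * F p.2.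

Lemma leval_nil F : leval [::] F = 0. Proof. by rewrite /leval big_nil. Qed.

Lemma leval_cons p a F : leval (p :: a) F = p.1 * F p.2 + leval a F.
Proof. by rewrite /leval big_cons. Qed.

Lemma leval_single (k : K) (g : G) F : leval [:: (k, g)] F = k * F g.
Proof. by rewrite leval_cons leval_nil addr0. Qed.

Lemma eq_leval a F1 F2 : F1 =1 F2 -> leval a F1 = leval a F2.
Proof. by move=> e; apply: eq_bigr => p _; rewrite e. Qed.

Lemma leval_add a b F : leval (kadd a b) F = leval a F + leval b F.
Proof. by rewrite /leval big_cat. Qed.

Lemma leval_scale k a F : leval (kscale k a) F = k * leval a F.
Proof.
by rewrite /leval big_map mulr_sumr; apply: eq_bigr => p _ /=; rewrite mulrA.
Qed.

Lemma leval_opp a F : leval (kopp a) F = - leval a F.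
Proof. by rewrite /kopp leval_scale mulN1r. Qed.

Lemma leval_sub a b F : leval (ksub a b) F = leval a F - leval b F.
Proof. by rewrite /ksub leval_add leval_opp. Qed.

Lemma leval_ksum l F : leval (ksum l) F = \sum_(a <- l) leval a F.
Proof.
by elim: l => [|a l IH]; rewrite ?big_nil ?big_cons /= ?leval_nil // leval_add IH.
Qed.

Lemma leval_mul a b F :
  leval (kmul a b) F = leval a (fun g => leval b (fun g' => F (g * g')%g)).
Proof.
rewrite /leval /kmul big_allpairs_dep; apply: eq_bigr => p _.
by rewrite mulr_sumr; apply: eq_bigr => q _ /=; rewrite mulrA.
Qed.

Lemma leval_star a F : leval (kstar a) F = leval a (fun g => F g^-1%g).
Proof. by rewrite /leval big_map. Qed.

Lemma leval_addF a X Y : leval a (fun g => X g + Y g) = leval a X + leval a Y.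
Proof. by rewrite /leval -big_split; apply: eq_bigr => p _; rewrite mulrDr. Qed.

Lemma leval_scaleF a k X : leval a (fun g => k * X g) = k * leval a X.
Proof. by rewrite /leval mulr_sumr; apply: eq_bigr => p _; rewrite mulrCA. Qed.

Lemma leval_subF a X Y : leval a (fun g => X g - Y g) = leval a X - leval a Y.
Proof.
rewrite leval_addF -mulN1r -leval_scaleF; congr (_ + _).
by apply: eq_leval => g; rewrite mulN1r.
Qed.

Lemma leval_zeroF a : leval a (fun _ => 0) = 0.
Proof. by rewrite /leval big1 // => p _; rewrite mulr0. Qed.

Lemma leval_exchange a b (X : G -> G -> K) :
  leval a (fun g => leval b (X g)) = leval b (fun g' => leval a (X^~ g')).
Proof.
rewrite /leval; under eq_bigr => p _ do rewrite mulr_sumr.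
rewrite exchange_big /=; apply: eq_bigr => q _; rewrite mulr_sumr.
by apply: eq_bigr => p _; rewrite mulrCA.
Qed.

Lemma coef_leval a g : coef a g = leval a (fun g' => (g' == g)%:R).
Proof.
rewrite /coef /leval big_mkcond; apply: eq_bigr => p _.
by case: eqP => _; rewrite ?mulr1 ?mulr0.
Qed.

Lemma leval_coef a (s : seq G) F : uniq s -> {subset map snd a <= s} ->
  leval a F = \sum_(g <- s) coef a g * F g.
Proof.
move=> us; elim: a => [|p a IH] sub.
  by rewrite leval_nil; apply/esym/big1 => g _; rewrite /coef big_nil mul0r.
rewrite leval_cons IH; last by move=> g ga; apply: sub; rewrite /= inE ga orbT.
have ps : p.2 \in s by apply: sub; rewrite /= inE eqxx.
rewrite [RHS](eq_bigr (fun g => (if g == p.2 then p.1 * F g else 0) + coef a g * F g)).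
  rewrite big_split /=; congr (_ + _); rewrite -big_mkcond -big_filter.
  have -> : [seq g <- s | g == p.2] = [:: p.2] by exact: filter_pred1_uniq.
  by rewrite big_seq1.
move=> g _; rewrite /coef big_cons eq_sym.
by case: eqP => [->|_]; rewrite ?add0r ?mulrDl.
Qed.

Definition weq a b : Prop := forall F, leval a F = leval b F.

Lemma weq_keq a b : weq a b <-> keq a b.
Proof.
split=> [e g | e F]; first by rewrite !coef_leval e.
set s := undup (map snd (a ++ b)).
have us : uniq s by exact: undup_uniq.
rewrite (@leval_coef a s) // ?(@leval_coef b s) //.
- by apply: eq_bigr => g _; rewrite e.
- by move=> g gb; rewrite mem_undup map_cat mem_cat gb orbT.
- by move=> g ga; rewrite mem_undup map_cat mem_cat ga.
Qed.

Lemma leval_mulA a b c F : leval (kmul (kmul a b) c) F = leval (kmul a (kmul b c)) F.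
Proof.
rewrite !leval_mul; apply: eq_leval => g; rewrite leval_mul; apply: eq_leval => g'.
by apply: eq_leval => g''; rewrite mulgA.
Qed.

Lemma weq_mull a a' b : weq a a' -> weq (kmul a b) (kmul a' b).
Proof. by move=> e F; rewrite !leval_mul e. Qed.

Lemma weq_mulr a b b' : weq b b' -> weq (kmul a b) (kmul a b').
Proof. by move=> e F; rewrite !leval_mul; apply: eq_leval => g; rewrite e. Qed.

Definition kone : kG := [:: (1, 1%g)].

Lemma leval_one F : leval kone F = F 1%g.
Proof. by rewrite leval_single mul1r. Qed.

End LinearEvaluation.

Section Ideal.
Variables (K : fieldType) (G : groupType).
Local Notation kG := (kG K G).
Implicit Types (c d f g : kG).

Lemma inI_weq f f' : weq f f' -> inI f -> inI f'.
Proof.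
move=> e [s [hs /weq_keq hk]]; exists s; split => //.
by apply/weq_keq => F; rewrite -e hk.
Qed.

Lemma inI0 : inI (kzero K G).
Proof. by exists [::]; split => // g. Qed.

Lemma inI_add f f' : inI f -> inI f' -> inI (kadd f f').
Proof.
move=> [s [hs /weq_keq es]] [t [ht /weq_keq et]]; exists (s ++ t); split.
  by move=> q; rewrite mem_cat => /orP [] ?; [apply: hs | apply: ht].
by apply/weq_keq => F; rewrite leval_add es et !leval_ksum map_cat big_cat.
Qed.

Lemma inI_lmul g f : inI f -> inI (kmul g f).
Proof.
move=> [s [hs /weq_keq es]].
exists (map (fun q => (kmul g q.1.1.1, q.1.1.2, q.1.2, q.2)) s); split.
  by move=> q /mapP [q' q's ->] /=; apply: hs.
apply/weq_keq => F; rewrite (weq_mulr _ es); elim: s {hs es} F => [|q s IH] F /=.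
  by rewrite leval_mul leval_nil; under eq_leval => g' do rewrite leval_nil;
     rewrite leval_zeroF.
rewrite leval_add -IH leval_mul; under eq_leval => g' do rewrite leval_add.
rewrite leval_addF -!leval_mul; congr (_ + _); case: q => [[[a c] d] b] /=.
by rewrite -leval_mulA; apply: weq_mull => F'; rewrite leval_mulA.
Qed.

Lemma inI_rmul g f : inI f -> inI (kmul f g).
Proof.
move=> [s [hs /weq_keq es]].
exists (map (fun q => (q.1.1.1, q.1.1.2, q.1.2, kmul q.2 g)) s); split.
  by move=> q /mapP [q' q's ->] /=; apply: hs.
apply/weq_keq => F; rewrite (weq_mull _ es); elim: s {hs es} F => [|q s IH] F /=.
  by rewrite leval_mul leval_nil.
rewrite leval_add -IH leval_mul leval_add -!leval_mul; congr (_ + _).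
by case: q => [[[a c] d] b] /=; rewrite leval_mulA.
Qed.

Lemma inI_scale k f : inI f -> inI (kscale k f).
Proof.
move=> If; apply: (@inI_weq (kmul [:: (k, 1%g)] f)); last exact: inI_lmul.
move=> F; rewrite leval_mul leval_single leval_scale; congr (_ * _).
by apply: eq_leval => g; rewrite mul1g.
Qed.

Lemma inI_gen c d : selfadj d -> inI (ksub (kmul c d) (kmul d c)).
Proof.
move=> sd; exists [:: (kone K G, c, d, kone K G)]; split.
  by move=> q; rewrite inE => /eqP ->.
apply/weq_keq => F /=; rewrite leval_add leval_nil addr0 !leval_mul leval_one.
by apply: eq_leval => g; rewrite leval_one mulg1 mul1g.
Qed.

End Ideal.

Section QuotientRing.
Variables (K : fieldType) (G : groupType).
Local Notation kG := (kG K G).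
Implicit Types (a b c : kG).

Lemma eqA_weq a b : weq a b -> eqA a b.
Proof.
move=> e; apply: (@inI_weq _ _ (kzero K G)); last exact: inI0.
by move=> F; rewrite leval_nil leval_sub e subrr.
Qed.

Lemma eqA_refl a : eqA a a. Proof. exact: eqA_weq. Qed.

Lemma eqA_sym a b : eqA a b -> eqA b a.
Proof.
move=> /(inI_scale (-1)); apply: inI_weq => F.
by rewrite leval_scale !leval_sub; ring.
Qed.

Lemma eqA_trans a b c : eqA a b -> eqA b c -> eqA a c.
Proof.
move=> hab hbc; have := inI_add hab hbc; apply: inI_weq => F.
by rewrite leval_add !leval_sub; ring.
Qed.

Lemma eqA_add a a' b b' : eqA a a' -> eqA b b' -> eqA (kadd a b) (kadd a' b').
Proof.
move=> ha hb; have := inI_add ha hb; apply: inI_weq => F.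
by rewrite !(leval_add, leval_sub); ring.
Qed.

Lemma eqA_scale k a a' : eqA a a' -> eqA (kscale k a) (kscale k a').
Proof.
move=> /(inI_scale k); apply: inI_weq => F.
by rewrite !(leval_scale, leval_sub); ring.
Qed.

Lemma eqA_mul a a' b b' : eqA a a' -> eqA b b' -> eqA (kmul a b) (kmul a' b').
Proof.
move=> ha hb; have := inI_add (inI_rmul b ha) (inI_lmul a' hb).
apply: inI_weq => F; rewrite leval_add leval_sub !leval_mul leval_sub.
by under [X in _ + X = _]eq_leval => g do rewrite leval_sub; rewrite leval_subF; ring.
Qed.

Definition QA := {P : kG -> Prop | exists a, P = eqA a}.
HB.instance Definition _ := gen_eqMixin QA.
HB.instance Definition _ := gen_choiceMixin QA.

Definition qpi a : QA := exist _ (eqA a) (ex_intro _ a erefl).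

Lemma qpiP a b : qpi a = qpi b <-> eqA a b.
Proof.
split=> [/(congr1 sval) /= -> | hab]; first exact: eqA_refl.
apply: eq_sig_hprop => [P p q|]; first exact: Prop_irrelevance.
apply: funext => c /=; apply: propext; split=> h; last exact: eqA_trans h.
by apply: eqA_trans h; apply: eqA_sym.
Qed.

Lemma qpi_weq a b : weq a b -> qpi a = qpi b.
Proof. by move=> e; apply/qpiP/eqA_weq. Qed.

Definition qrepr (q : QA) : kG := sval (cid (svalP q)).

Lemma qreprK q : qpi (qrepr q) = q.
Proof.
rewrite /qrepr; case: cid => a /= e.
by apply: eq_sig_hprop => [P p p'|]; [exact: Prop_irrelevance | rewrite /= -e].
Qed.

Lemma eqA_repr a : eqA a (qrepr (qpi a)).
Proof. by apply/qpiP; rewrite qreprK. Qed.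

(* Ring operations on classes, computed on representatives (locked, so that
   they are only unfolded through the [qpi_*] lemmas). *)
Definition qzero := qpi (kzero K G).
Definition qone := qpi (kone K G).
Definition qadd p q := locked (qpi (kadd (qrepr p) (qrepr q))).
Definition qopp p := locked (qpi (kopp (qrepr p))).
Definition qmul p q := locked (qpi (kmul (qrepr p) (qrepr q))).

Lemma qpi_add a b : qpi (kadd a b) = qadd (qpi a) (qpi b).
Proof. by rewrite /qadd -lock; apply/qpiP; apply: eqA_add; apply: eqA_repr. Qed.

Lemma qpi_opp a : qpi (kopp a) = qopp (qpi a).
Proof. by rewrite /qopp -lock; apply/qpiP; apply: eqA_scale; apply: eqA_repr. Qed.

Lemma qpi_mul a b : qpi (kmul a b) = qmul (qpi a) (qpi b).
Proof. by rewrite /qmul -lock; apply/qpiP; apply: eqA_mul; apply: eqA_repr. Qed.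

Lemma qaddA : associative qadd.
Proof.
move=> p q r; rewrite -(qreprK p) -(qreprK q) -(qreprK r) -!qpi_add.
by apply: qpi_weq => F; rewrite !leval_add addrA.
Qed.

Lemma qaddC : commutative qadd.
Proof.
move=> p q; rewrite -(qreprK p) -(qreprK q) -!qpi_add.
by apply: qpi_weq => F; rewrite !leval_add addrC.
Qed.

Lemma qadd0 : left_id qzero qadd.
Proof.
move=> p; rewrite -(qreprK p) /qzero -!qpi_add.
by apply: qpi_weq => F; rewrite !leval_add leval_nil add0r.
Qed.

Lemma qaddN : left_inverse qzero qopp qadd.
Proof.
move=> p; rewrite -(qreprK p) /qzero -qpi_opp -!qpi_add.
by apply: qpi_weq => F; rewrite !leval_add leval_opp leval_nil addNr.
Qed.

Lemma qmulA : associative qmul.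
Proof.
move=> p q r; rewrite -(qreprK p) -(qreprK q) -(qreprK r) -!qpi_mul.
by apply: qpi_weq => F; rewrite leval_mulA.
Qed.

Lemma qmul1 : left_id qone qmul.
Proof.
move=> p; rewrite -(qreprK p) /qone -!qpi_mul.
by apply: qpi_weq => F; rewrite leval_mul leval_one; apply: eq_leval => g; rewrite mul1g.
Qed.

Lemma qmulr1 : right_id qone qmul.
Proof.
move=> p; rewrite -(qreprK p) /qone -!qpi_mul.
by apply: qpi_weq => F; rewrite leval_mul; apply: eq_leval => g; rewrite leval_one mulg1.
Qed.

Lemma qmulDl : left_distributive qmul qadd.
Proof.
move=> p q r; rewrite -(qreprK p) -(qreprK q) -(qreprK r) -!qpi_mul -!qpi_add -qpi_mul.
by apply: qpi_weq => F; rewrite leval_mul !leval_add !leval_mul.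
Qed.

Lemma qmulDr : right_distributive qmul qadd.
Proof.
move=> p q r; rewrite -(qreprK p) -(qreprK q) -(qreprK r) -!qpi_mul -!qpi_add -qpi_mul.
apply: qpi_weq => F; rewrite leval_mul !leval_add !leval_mul -leval_addF.
by apply: eq_leval => g; rewrite leval_add.
Qed.

HB.instance Definition _ := @GRing.isPzRing.Build QA qzero qopp qadd qone qmul
  qaddA qaddC qadd0 qaddN qmulA qmul1 qmulr1 qmulDl qmulDr.

Lemma qpiD a b : qpi (kadd a b) = qpi a + qpi b. Proof. exact: qpi_add. Qed.
Lemma qpiN a : qpi (kopp a) = - qpi a. Proof. exact: qpi_opp. Qed.
Lemma qpiM a b : qpi (kmul a b) = qpi a * qpi b. Proof. exact: qpi_mul. Qed.
Lemma qpiB a b : qpi (ksub a b) = qpi a - qpi b. Proof. by rewrite /ksub qpiD qpiN. Qed.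
Lemma qpi1 : qpi (kone K G) = 1. Proof. by []. Qed.

Lemma qpi_ksum l : qpi (ksum l) = \sum_(a <- l) qpi a.
Proof. by elim: l => [|a l IH]; rewrite ?big_nil ?big_cons //= qpiD IH. Qed.

End QuotientRing.

Section Transfer.
Variables (K : fieldType) (G : groupType).
Hypothesis charK0 : [pchar K] =i pred0.
Local Notation kG := (kG K G).
Local Notation QA := (QA K G).
Local Notation qpi := (@qpi K G).
Implicit Types (a b : kG).

Definition qscal (k : K) : QA := qpi [:: (k, 1%g)].

Lemma qpiZ k a : qpi (kscale k a) = qscal k * qpi a.
Proof.
rewrite -qpiM; apply: qpi_weq => F; rewrite leval_scale leval_mul leval_single.
by congr (_ * _); apply: eq_leval => g; rewrite mul1g.
Qed.

Lemma qscal_central k : central (qscal k).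
Proof.
move=> r; rewrite -(qreprK r) /qscal -!qpiM; apply: qpi_weq => F.
rewrite !leval_mul leval_single -leval_scaleF; apply: eq_leval => g.
by rewrite leval_single mul1g mulg1.
Qed.

Lemma qscalN k : qscal (- k) = - qscal k.
Proof. by rewrite /qscal -qpiN; apply: qpi_weq => F; rewrite leval_opp !leval_single mulNr. Qed.

Lemma qscal_half : qscal (1 / 2%:R) * 2%:R = 1.
Proof.
have two_neq0 : (2%:R : K) != 0 by rewrite (pcharf0P K).1.
rewrite [2%:R : QA]mulr2n -qpi1 -qpiD /qscal -qpiM; apply: qpi_weq => F.
rewrite leval_mul leval_single leval_add !leval_one !mul1g -mulr2n.
by rewrite -[F _ *+ 2]mulr_natl mulrA div1r mulVf ?mul1r.
Qed.

Lemma qpi_star_mul a b : qpi (kstar (kmul a b)) = qpi (kstar b) * qpi (kstar a).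
Proof.
rewrite -qpiM; apply: qpi_weq => F; rewrite leval_star !leval_mul leval_star.
rewrite leval_exchange; apply: eq_leval => g; rewrite leval_star.
by apply: eq_leval => g'; rewrite invgM.
Qed.

Lemma qpi_star_add a b : qpi (kstar (kadd a b)) = qpi (kstar a) + qpi (kstar b).
Proof. by rewrite -qpiD /kstar /kadd map_cat. Qed.

Lemma qpi_star_scale k a : qpi (kstar (kscale k a)) = qscal k * qpi (kstar a).
Proof. by rewrite -qpiZ; congr qpi; rewrite /kstar /kscale -!map_comp. Qed.

Lemma qpi_star_sub a b : qpi (kstar (ksub a b)) = qpi (kstar a) - qpi (kstar b).
Proof.
rewrite /ksub /kopp qpi_star_add qpi_star_scale qscalN mulNr.
by rewrite (_ : qscal 1 = 1) // mul1r.
Qed.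

Lemma qpi_Lambda a : inLambda a -> qpi (kstar a) = - qpi a.
Proof. by move=> ha; rewrite -qpiN; apply/qpiP. Qed.

Definition LamQ (q : QA) : Prop := exists2 a, q = qpi a & inLambda a.

Lemma qpi_br a b : qpi (kbr a b) = br (qscal (1 / 2%:R)) (qpi a) (qpi b).
Proof. by rewrite brE /kbr qpiZ qpiB !qpiM. Qed.

Lemma qpi_dot a b : qpi (kdot a b) = dot (qscal (1 / 2%:R)) (qpi a) (qpi b).
Proof. by rewrite dotE acommE /kdot qpiZ qscalN qpiD !qpiM. Qed.

Lemma selfadj_sym_part k (d : kG) : selfadj (kscale k (kadd d (kstar d))).
Proof.
apply/weq_keq => F; rewrite leval_star !leval_scale !leval_add !leval_star.
by rewrite addrC; congr (_ * (_ + _)); apply: eq_leval => g; rewrite invgK.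
Qed.

(* For a, b in Λ_G, ab + ba is the class of the self-adjoint element
   (d + d^* )/2 with d = ab + ba, hence it commutes with everything. *)
Lemma LamQ_acomm_central p q : LamQ p -> LamQ q -> central (p * q + q * p).
Proof.
move=> [a -> ha] [b -> hb] r; rewrite -(qreprK r).
pose d := kadd (kmul a b) (kmul b a).
pose e := kscale (1 / 2%:R) (kadd d (kstar d)).
have e_class : qpi e = qpi a * qpi b + qpi b * qpi a.
  rewrite /e qpiZ qpiD qpi_star_add !qpi_star_mul !qpi_Lambda // /d qpiD !qpiM.
  by rewrite !mulrNN [qpi b * qpi a + _]addrC (half_double qscal_half).
rewrite -e_class -!qpiM; apply/qpiP/eqA_sym/inI_gen; exact: selfadj_sym_part.
Qed.

Lemma inLambda_br a b : inLambda a -> inLambda b -> inLambda (kbr a b).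
Proof.
move=> ha hb; apply/qpiP; rewrite qpiN /kbr qpi_star_scale qpi_star_sub.
rewrite !qpi_star_mul !qpi_Lambda // qpiZ qpiB !qpiM !mulrNN.
by rewrite -[RHS]mulrN opprB.
Qed.

Lemma LamQ_br p q : LamQ p -> LamQ q -> LamQ (qscal (1 / 2%:R) * (p * q - q * p)).
Proof.
move=> [a -> ha] [b -> hb]; exists (kbr a b); last exact: inLambda_br.
by rewrite qpi_br brE.
Qed.

End Transfer.

Unset Implicit Arguments.

Theorem mainTheorem8 (K : fieldType) (G : groupType)
  (charK0 : [pchar K] =i pred0)
  (x y z u v w : kG K G) :
  inLambda x -> inLambda y -> inLambda z ->
  inLambda u -> inLambda v -> inLambda w ->
  eqA
    (ksum [:: kmul (kdot (kbr y z) w) (kdot x u);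
              kopp (kmul (kdot (kbr x z) w) (kdot y u));
              kmul (kdot (kbr x y) w) (kdot z u);
              kopp (kmul (kdot (kbr x y) z) (kdot w u))])
    (kzero K G)
  /\
  eqA (kmul (kdot (kbr x y) z) (kdot (kbr u v) w))
      (kdet3 (kdot x u) (kdot x v) (kdot x w)
             (kdot y u) (kdot y v) (kdot y w)
             (kdot z u) (kdot z v) (kdot z w)).
Proof.
move=> hx hy hz hu hv hw.
have L (a : kG K G) : inLambda a -> LamQ (qpi a) by exists a.
have h_central := @qscal_central K G (1 / 2%:R).
have h_half := @qscal_half K G charK0.
have acomm_central := @LamQ_acomm_central K G charK0.
have Lam_closed := @LamQ_br K G.
split; apply/qpiP.
  rewrite qpi_ksum !big_cons big_nil addr0 !addrA !qpiN !qpiM !qpi_dot !qpi_br.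
  exact: (lambda_identity_i h_central h_half acomm_central Lam_closed
            (L _ hx) (L _ hy) (L _ hz) (L _ hw) (L _ hu)).
rewrite [RHS]qpi_ksum !big_cons big_nil addr0 !addrA !qpiN !qpiM !qpi_dot !qpi_br.
exact: (lambda_identity_ii h_central h_half acomm_central Lam_closed
          (L _ hx) (L _ hy) (L _ hz) (L _ hu) (L _ hv) (L _ hw)).
Qed.
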